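(* Let $A$ be a nonempty finite poset. Suppose that for every $n\ge0$, every poset $X$, and every pushout square in $\mathbf{Pos}$ $$\begin{array}{ccc}\Pi\mathrm{Sd}^2\partial\Delta[n]&\to&X\\ \downarrow&&\downarrow\\ \Pi\mathrm{Sd}^2\Delta[n]&\to&Y\end{array}$$ (with left map induced by the boundary inclusion), if $A$ is a retract of $Y$ then $A$ is a retract of $X$. Then $A$ is not cofibrant in the model structure on $\mathbf{Pos}$.
   Context: $\Pi\mathrm{Sd}^2\Delta[n]$ is the poset whose elements are chains $S_0\subsetneq\cdots\subsetneq S_k$ of nonempty subsets of $\{0,\dots,n\}$, ordered by inclusion of chains (viewed as sets of subsets); $\Pi\mathrm{Sd}^2\partial\Delta[n]$ is the subposet of chains with $S_k\neq\{0,\dots,n\}$. The model structure on $\mathbf{Pos}$: a map $f$ is a weak equivalence/fibration iff it is so as a functor in the Thomason model structure on $\mathbf{Cat}$ (i.e. $\mathrm{Ex}^2N f$ is a weak equivalence/fibration of simplicial sets); it is compactly generated with generating cofibrations the inclusions $\Pi\mathrm{Sd}^2\partial\Delta[n]\to\Pi\mathrm{Sd}^2\Delta[n]$. An object $A$ is a retract of $Y$ if there are maps $A\to Y\to A$ composing to $\mathrm{id}_A$. *)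

From mathcomp Require Import all_boot.
From Stdlib Require List.
Set Implicit Arguments. Unset Strict Implicit. Unset Printing Implicit Defensive.

Record Poset := {
  carrier :> Type;
  ple : carrier -> carrier -> Prop;
  ple_refl : forall x, ple x x;
  ple_antisym : forall x y, ple x y -> ple y x -> x = y;
  ple_trans : forall x y z, ple x y -> ple y z -> ple x z }.

Record Mono (P Q : Poset) := {
  mfun :> P -> Q;
  mmono : forall x y, ple x y -> ple (mfun x) (mfun y) }.

Definition mcomp (P Q R : Poset) (g : Mono Q R) (f : Mono P Q) : Mono P R.
Proof.
  refine {| mfun := fun x => g (f x) |}.
  by move=> x y h; apply: mmono; apply: mmono.
Defined.

Definition mid (P : Poset) : Mono P P.
Proof. by refine {| mfun := fun x => x |}. Defined.

Definition meq (P Q : Poset) (f g : Mono P Q) : Prop := forall x, f x = g x.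

(* Pushout square in Pos:   P --f--> X
                            |i       |g
                            v        v
                            Q --j--> Y      *)
Definition is_pushout (P X Q Y : Poset) (i : Mono P Q) (f : Mono P X)
  (j : Mono Q Y) (g : Mono X Y) : Prop :=
  meq (mcomp g f) (mcomp j i) /\
  forall (Z : Poset) (a : Mono X Z) (b : Mono Q Z),
    meq (mcomp a f) (mcomp b i) ->
    exists u : Mono Y Z,
      meq (mcomp u g) a /\ meq (mcomp u j) b /\
      forall u' : Mono Y Z, meq (mcomp u' g) a -> meq (mcomp u' j) b -> meq u' u.

Definition retract_of (A Y : Poset) : Prop :=
  exists (s : Mono A Y) (r : Mono Y A), meq (mcomp r s) (mid A).

Definition finite_poset (A : Poset) : Prop :=
  exists l : List.list A, forall x : A, List.In x l.

(* A chain S_0 < ... < S_k of nonempty subsets of {0..n} is the same as a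
   nonempty set of nonempty subsets of 'I_n.+1 totally ordered by inclusion. *)
Definition is_chain n (c : {set {set 'I_n.+1}}) : bool :=
  [&& c != set0, set0 \notin c &
      [forall S in c, forall T in c, (S \subset T) || (T \subset S)]].

(* boundary: top element S_k is not the full set, i.e. setT is not in c *)
Definition is_bd_chain n (c : {set {set 'I_n.+1}}) : bool :=
  is_chain c && (setT \notin c).

Definition chain_poset (n : nat) (pr : {set {set 'I_n.+1}} -> bool) : Poset.
Proof.
  refine {| carrier := {c : {set {set 'I_n.+1}} | pr c};
            ple := fun c d => (val c \subset val d) |}.
  - by move=> x; exact: subxx.
  - move=> x y h1 h2; apply: val_inj; apply/eqP; rewrite eqEsubset; apply/andP; by split.
  - by move=> x y z h1 h2; exact: subset_trans h1 h2.
Defined.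

Definition PiSd2Delta (n : nat) : Poset := @chain_poset n (@is_chain n).
Definition PiSd2bdDelta (n : nat) : Poset := @chain_poset n (@is_bd_chain n).

Definition bd_incl (n : nat) : Mono (PiSd2bdDelta n) (PiSd2Delta n).
Proof.
  refine {| mfun := fun c : PiSd2bdDelta n =>
              (exist _ (val c) (proj1 (andP (valP c))) : PiSd2Delta n) |}.
  by move=> x y h.
Defined.

(* Trivial fibrations of the compactly generated model structure = maps with
   the right lifting property against the generating cofibrations bd_incl n. *)
Definition trivial_fibration (E B : Poset) (p : Mono E B) : Prop :=
  forall n (a : Mono (PiSd2bdDelta n) E) (b : Mono (PiSd2Delta n) B),
    meq (mcomp p a) (mcomp b (bd_incl n)) ->
    exists h : Mono (PiSd2Delta n) E,
      meq (mcomp h (bd_incl n)) a /\ meq (mcomp p h) b.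

(* A is cofibrant iff (empty -> A) has the LLP against all trivial fibrations;
   since maps out of the empty poset are unique this means: every map A -> B
   lifts along every trivial fibration E -> B. *)
Definition cofibrant (A : Poset) : Prop :=
  forall (E B : Poset) (p : Mono E B), trivial_fibration p ->
    forall b : Mono A B, exists h : Mono A E, meq (mcomp p h) b.

From mathcomp Require Import all_boot.
From Stdlib Require Import ClassicalEpsilon ProofIrrelevance.
From Stdlib Require List.
Set Implicit Arguments. Unset Strict Implicit. Unset Printing Implicit Defensive.

(* If A were cofibrant, id_A would lift along every trivial fibration onto A.
   One such fibration is the projection to A of the free cell complex over A,
   whose cells are copies of PiSd2Delta n attached along PiSd2bdDelta n and
   mapped to A: every lifting problem against a generating cofibration is
   solved by attaching a new cell.  As A is finite, a section of it lands in a
   finite subcomplex, of which A is then a retract.  Removing a cell of maximal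
   height exhibits such a subcomplex as a pushout of a smaller one along a
   generating cofibration, so the hypothesis pushes the retraction down to the
   empty poset, which is impossible since A is inhabited. *)

Inductive cellular : Poset -> Prop :=
| cellular_empty (Z : Poset) : (Z -> False) -> cellular Z
| cellular_pushout n (X Y : Poset) (f : Mono (PiSd2bdDelta n) X)
    (j : Mono (PiSd2Delta n) Y) (g : Mono X Y) :
    cellular X -> is_pushout (bd_incl n) f j g -> cellular Y.

Lemma cellular_not_retract (A : Poset) : inhabited A ->
  (forall (n : nat) (X Y : Poset) (f : Mono (PiSd2bdDelta n) X)
          (j : Mono (PiSd2Delta n) Y) (g : Mono X Y),
      is_pushout (bd_incl n) f j g -> retract_of A Y -> retract_of A X) ->
  forall Z, cellular Z -> ~ retract_of A Z.
Proof.
move=> [a0] retract_pushout Z; elim=> [Z0 Z0_empty | n X Y f j g _ IH XY_pushout] AZ.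
- by case: AZ => s _; exact: Z0_empty (s a0).
- exact: IH (retract_pushout _ _ _ _ _ _ XY_pushout AZ).
Qed.

Definition classicb (P : Prop) : bool :=
  if excluded_middle_informative P then true else false.

Lemma classicbP (P : Prop) : reflect P (classicb P).
Proof. by rewrite /classicb; case: excluded_middle_informative => H; constructor. Qed.

Lemma sval_inj (T : Type) (P : T -> Prop) : injective (@sval T P).
Proof. by case=> x px [y py] /= xy; apply: subset_eq_compat. Qed.

Definition chains n := {c : {set {set 'I_n.+1}} | is_chain c}.
Definition bd_chains n := {c : {set {set 'I_n.+1}} | is_bd_chain c}.

Lemma chainsP n (c : chains n) : (exists d, c = bd_incl n d) \/ setT \in val c.
Proof.
case cT: (setT \in val c); [by right | left].
have c_bd : is_bd_chain (val c) by rewrite /is_bd_chain (valP c) cT.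
by exists (exist _ (val c) c_bd); apply: val_inj.
Qed.

Section FreeCellComplex.
Variable A : Poset.

(* [Point n c att b] is the point [c] of an [n]-cell attached along [att]
   and mapped to [A] by [b]. *)
Inductive point : Type :=
  Point n (c : chains n) (att : bd_chains n -> point) (b : chains n -> A).
Arguments Point : clear implicits.

Fixpoint le_pt (x y : point) : Prop :=
  let: Point n c att b := y in
  (exists2 c' : chains n, x = Point n c' att b & val c' \subset val c) \/
  (exists2 d : bd_chains n, val d \subset val c & le_pt x (att d)).

Fixpoint height (x : point) : nat :=
  let: Point n _ att _ := x in (\max_(d : bd_chains n) height (att d)).+1.

Lemma height_att n c att b (d : bd_chains n) : height (att d) < height (Point n c att b).
Proof. by rewrite ltnS; apply: (leq_bigmax (F := fun d => height (att d))). Qed.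

Lemma Point_inj n c att b c' att' b' :
  Point n c att b = Point n c' att' b' -> [/\ c = c', att = att' & b = b'].
Proof. by case; do 3!move/(@eq_from_Tagged nat _ _ _ _) ->. Qed.

Lemma le_pt_refl x : le_pt x x.
Proof. by case: x => n c att b; left; exists c. Qed.

Lemma le_pt_trans x y z : le_pt x y -> le_pt y z -> le_pt x z.
Proof.
elim: z x y => n c att IH b x y xy [[c' y_def c'c] | [d dc yd]]; last first.
  by right; exists d; last exact: IH xy yd.
move: xy; rewrite y_def => -[[c'' -> c''c'] | [d dc' xd]].
- by left; exists c''; last exact: subset_trans c''c' c'c.
- by right; exists d; first exact: subset_trans dc' c'c.
Qed.

Lemma le_pt_height x y : le_pt x y -> height x <= height y.
Proof.
elim: y x => n c att IH b x /= [[c' -> _] | [d _ xd]] //.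
exact: leq_trans (IH d _ xd) (ltnW (height_att c att b d)).
Qed.

Definition same_cell (k x : point) : Prop :=
  let: Point n _ att b := k in exists c, x = Point n c att b.

Lemma same_cell_refl k : same_cell k k.
Proof. by case: k => n c att b; exists c. Qed.

Lemma same_cell_sym k x : same_cell k x -> same_cell x k.
Proof. by case: k => n c att b [c' ->]; exists c. Qed.

Lemma same_cell_trans k x y : same_cell k x -> same_cell x y -> same_cell k y.
Proof. by case: k => n c att b [c' ->] [c'' ->]; exists c''. Qed.

Lemma same_cell_height k x : same_cell k x -> height x = height k.
Proof. by case: k => n c att b [c' ->]. Qed.

Lemma le_pt_same_cell x y : le_pt x y -> height y <= height x -> same_cell y x.
Proof.
case: y => n c att b /= [[c' -> _] | [d _ xd]] hyx; first by exists c'.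
have := leq_ltn_trans (le_pt_height xd) (height_att c att b d).
by rewrite ltnNge hyx.
Qed.

Lemma le_pt_in_cell n c c' att b :
  le_pt (Point n c' att b) (Point n c att b) -> val c' \subset val c.
Proof.
case=> [[c'' /Point_inj [-> _ _] //] | [d _ c'd]].
have := leq_ltn_trans (le_pt_height c'd) (height_att c att b d).
by rewrite ltnn.
Qed.

Lemma le_pt_antisym x y : le_pt x y -> le_pt y x -> x = y.
Proof.
move=> xy yx; have := le_pt_same_cell xy (le_pt_height yx).
case: y xy yx => n c att b xy yx [c' x_def]; subst x.
by congr Point; apply/val_inj/eqP; rewrite eqEsubset (le_pt_in_cell xy) (le_pt_in_cell yx).
Qed.

Definition proj_pt (x : point) : A := let: Point _ c _ b := x in b c.

Record attaching n (att : bd_chains n -> point) (b : chains n -> A) : Prop := {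
  att_mono : forall d1 d2 : bd_chains n, val d1 \subset val d2 -> le_pt (att d1) (att d2);
  map_mono : forall c1 c2 : chains n, val c1 \subset val c2 -> ple (b c1) (b c2);
  proj_att : forall d, proj_pt (att d) = b (bd_incl n d) }.

(* Points on the boundary of a cell are represented in the cells they are
   attached to, so well-formed points have [setT] in their chain. *)
Fixpoint wf_pt (x : point) : Prop :=
  let: Point n c att b := x in
  [/\ setT \in val c, forall d, wf_pt (att d) & attaching att b].

Lemma proj_pt_mono x y : wf_pt y -> le_pt x y -> ple (proj_pt x) (proj_pt y).
Proof.
elim: y x => n c att IH b x /= [_ att_wf att_b] [[c' -> c'c] | [d dc xd]].
- exact: map_mono att_b _ _ c'c.
- apply: ple_trans (IH d x (att_wf d) xd) _.
  by rewrite (proj_att att_b); apply: (map_mono att_b).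
Qed.

Definition pt_poset (P : point -> Prop) : Poset.
Proof.
refine {| carrier := {x : point | P x}; ple x y := le_pt (sval x) (sval y) |}.
- by move=> x; exact: le_pt_refl.
- by move=> x y xy yx; apply/sval_inj/le_pt_antisym.
- by move=> x y z; exact: le_pt_trans.
Defined.

Definition attach n (att : bd_chains n -> point) (b : chains n -> A) (c : chains n) : point :=
  if insub (val c) is Some d then att d else Point n c att b.

Section Attach.
Variables (n : nat) (att : bd_chains n -> point) (b : chains n -> A).

Lemma attach_bd d : attach att b (bd_incl n d) = att d.
Proof.
rewrite /attach; case: insubP => [d' _ d'd | ]; first by congr att; apply: val_inj.
by rewrite /= (valP d).
Qed.

Lemma attach_int (c : chains n) : setT \in val c -> attach att b c = Point n c att b.
Proof.
move=> cT; rewrite /attach; case: insubP => [d | //].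
by rewrite /is_bd_chain cT andbF.
Qed.

Hypotheses (att_wf : forall d, wf_pt (att d)) (att_b : attaching att b).

Lemma attach_wf (c : chains n) : wf_pt (attach att b c).
Proof. by case: (chainsP c) => [[d ->] | cT]; [rewrite attach_bd | rewrite attach_int]. Qed.

Lemma attach_mono (c1 c2 : chains n) :
  val c1 \subset val c2 -> le_pt (attach att b c1) (attach att b c2).
Proof.
case: (chainsP c1) => [[d1 ->] | c1T]; case: (chainsP c2) => [[d2 ->] | c2T] c12.
- by rewrite !attach_bd; exact: (att_mono att_b).
- by rewrite attach_bd attach_int //; right; exists d1; last exact: le_pt_refl.
- by move: (valP d2) (subsetP c12 _ c1T); rewrite /is_bd_chain => /andP [_ /negP].
- by rewrite !attach_int //; left; exists c1.
Qed.

Lemma proj_attach (c : chains n) : proj_pt (attach att b c) = b c.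
Proof.
case: (chainsP c) => [[d ->] | cT]; last by rewrite attach_int.
by rewrite attach_bd (proj_att att_b).
Qed.

End Attach.

Definition free_cx : Poset := pt_poset wf_pt.

Definition proj_cx : Mono free_cx A :=
  @Build_Mono free_cx A (fun x => proj_pt (sval x))
    (fun x y => @proj_pt_mono (sval x) (sval y) (proj2_sig y)).

Lemma proj_cx_trivial_fibration : trivial_fibration proj_cx.
Proof.
move=> n a e ae; pose att d := sval (a d).
have att_wf d : wf_pt (att d) by exact: proj2_sig.
have att_b : attaching att e.
  by split=> [d1 d2 | c1 c2 | d]; [exact: (mmono a) | exact: (mmono e) | exact: ae].
pose h c : free_cx := exist _ (attach att e c) (attach_wf att_wf att_b c).
exists (@Build_Mono (PiSd2Delta n) free_cx h (fun c1 c2 => @attach_mono _ _ _ att_b c1 c2)).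
split=> [d | c]; last exact: proj_attach.
by apply: sval_inj; rewrite /= attach_bd.
Qed.

Definition in_subcx (S : list point) (x : point) : Prop :=
  exists2 k, List.In k S & same_cell k x.

Definition subcx (S : list point) : Poset := pt_poset (fun x => wf_pt x /\ in_subcx S x).

Definition subcx_closed (S : list point) : Prop :=
  forall k, List.In k S ->
    wf_pt k /\ let: Point n _ att _ := k in forall d, in_subcx S (att d).

Lemma exists_max_height (S : list point) : S <> nil ->
  exists2 k, List.In k S & forall k', List.In k' S -> height k' <= height k.
Proof.
elim: S => [//|x [|y S] IH] _; first by exists x => [|k' [<-|[]]]; [left|].
have [k kS k_max] := IH ltac:(by []).
case: (leqP (height x) (height k)) => [xk | kx].
- by exists k => [|k' [<-|k'S]]; [right | | exact: k_max].
- by exists x => [|k' [<-|k'S]]; [left | | exact: leq_trans (k_max _ k'S) (ltnW kx)].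
Qed.

Definition drop_cell (K : point) (S : list point) : list point :=
  List.filter (fun k => ~~ classicb (same_cell K k)) S.

Lemma In_drop_cell K S k : List.In k (drop_cell K S) <-> List.In k S /\ ~ same_cell K k.
Proof.
rewrite List.filter_In; split=> -[kS Kk]; split=> //; first by move/classicbP; apply/negP.
by apply/negP => /classicbP.
Qed.

Lemma length_drop_cell K S : List.In K S -> length (drop_cell K S) < length S.
Proof.
elim: S => [//|x S IH] /= [-> | KS].
- rewrite (introT (classicbP _) (same_cell_refl K)) ltnS.
  by apply/leP; exact: List.filter_length_le.
- by case: ifP => _ /=; rewrite ltnS; [exact: IH | exact: ltnW (IH KS)].
Qed.

Lemma in_subcx_drop_cell K S y :
  in_subcx (drop_cell K S) y <-> in_subcx S y /\ ~ same_cell K y.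
Proof.
split=> [[k /In_drop_cell [kS Kk] ky] | [[k kS ky] Ky]].
- by split=> [|Ky]; [exists k | apply: Kk; exact: same_cell_trans Ky (same_cell_sym ky)].
- by exists k => //; apply/In_drop_cell; split=> // Kk; apply: Ky; exact: same_cell_trans Kk ky.
Qed.

Lemma drop_cell_closed K S : subcx_closed S ->
  (forall k, List.In k S -> height k <= height K) -> subcx_closed (drop_cell K S).
Proof.
move=> S_closed K_top k /In_drop_cell [kS Kk]; have [k_wf att_S] := S_closed k kS.
split=> //; case: k kS Kk k_wf att_S => n c att b kS _ _ att_S d.
apply/in_subcx_drop_cell; split=> [|/same_cell_height K_d]; first exact: att_S.
by have := leq_trans (height_att c att b d) (K_top _ kS); rewrite K_d ltnn.
Qed.

Section DropTopCell.
Variables (S : list point) (n : nat) (c0 : chains n).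
Variables (att : bd_chains n -> point) (b : chains n -> A).
Let K := Point n c0 att b.
Hypotheses (K_S : List.In K S) (K_top : forall k, List.In k S -> height k <= height K).
Hypothesis S_closed : subcx_closed S.
Let S' := drop_cell K S.

Lemma top_cell_wf : wf_pt (Point n c0 att b).
Proof. exact: (S_closed K_S).1. Qed.

Lemma top_att_wf d : wf_pt (att d).
Proof. by case: top_cell_wf => _ att_wf _; exact: att_wf. Qed.

Lemma top_attaching : attaching att b.
Proof. by case: top_cell_wf. Qed.

Lemma top_att_in d : in_subcx S' (att d).
Proof.
apply/in_subcx_drop_cell; split=> [|/same_cell_height K_d]; first exact: (S_closed K_S).2.
by have := height_att c0 att b d; rewrite K_d ltnn.
Qed.

Lemma top_cell_in c : in_subcx S (attach att b c).
Proof.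
case: (chainsP c) => [[d ->] | cT]; first by rewrite attach_bd; exact: (S_closed K_S).2.
by rewrite attach_int //; exists K => //; exists c.
Qed.

Lemma subcx_height (x : subcx S) : height (sval x) <= height K.
Proof. by case: x => x [_ [k kS /same_cell_height ->]]; exact: K_top. Qed.

Definition top_att : Mono (PiSd2bdDelta n) (subcx S') :=
  @Build_Mono (PiSd2bdDelta n) (subcx S')
    (fun d => exist _ (att d) (conj (top_att_wf d) (top_att_in d)))
    (att_mono top_attaching).

Definition top_cell : Mono (PiSd2Delta n) (subcx S) :=
  @Build_Mono (PiSd2Delta n) (subcx S)
    (fun c => exist _ (attach att b c)
                (conj (attach_wf top_att_wf top_attaching c) (top_cell_in c)))
    (attach_mono top_attaching).

Definition drop_incl : Mono (subcx S') (subcx S) :=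
  @Build_Mono (subcx S') (subcx S)
    (fun x => exist _ (sval x)
                (conj (proj2_sig x).1 ((in_subcx_drop_cell _ _ _).1 (proj2_sig x).2).1))
    (fun x y xy => xy).

Definition drop_restrict (x : subcx S) (Kx : ~ same_cell K (sval x)) : subcx S' :=
  exist _ (sval x) (conj (proj2_sig x).1 ((in_subcx_drop_cell _ _ _).2 (conj (proj2_sig x).2 Kx))).

Section Glue.
Variables (W : Poset) (a : Mono (subcx S') W) (e : Mono (PiSd2Delta n) W).
Hypothesis ae : meq (mcomp a top_att) (mcomp e (bd_incl n)).

Definition glue_fun (x : subcx S) : W :=
  match excluded_middle_informative (same_cell K (sval x)) with
  | left Kx => e (sval (constructive_indefinite_description _ Kx))
  | right Kx => a (drop_restrict Kx)
  end.

Lemma glue_cell x c : sval x = Point n c att b -> glue_fun x = e c.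
Proof.
move=> x_def; rewrite /glue_fun; case: excluded_middle_informative => [Kx | []]; last by exists c.
by case: constructive_indefinite_description => c' /=; rewrite x_def => /Point_inj [->].
Qed.

Lemma glue_drop x (y : subcx S') : sval x = sval y -> glue_fun x = a y.
Proof.
move=> xy; rewrite /glue_fun; case: excluded_middle_informative => [Kx | Kx].
- by case/in_subcx_drop_cell: (proj2_sig y).2 => _ []; rewrite -xy.
- by have -> : drop_restrict Kx = y by apply: sval_inj.
Qed.

Lemma glue_fun_mono x y : ple x y -> ple (glue_fun x) (glue_fun y).
Proof.
move=> xy.
case: (excluded_middle_informative (same_cell K (sval x))) => Kx;
case: (excluded_middle_informative (same_cell K (sval y))) => Ky.
- case: Kx Ky => [c1 x_def] [c2 y_def]; rewrite (glue_cell x_def) (glue_cell y_def).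
  by apply: (mmono e); apply: (@le_pt_in_cell n c2 c1 att b); rewrite -x_def -y_def.
- have yx : height (sval y) <= height (sval x).
    by rewrite (same_cell_height Kx); exact: subcx_height.
  by case: Ky; exact: same_cell_trans Kx (same_cell_sym (le_pt_same_cell xy yx)).
- case: Ky => c y_def; rewrite (glue_cell y_def) (glue_drop (y := drop_restrict Kx)) //.
  move: (xy : le_pt (sval x) (sval y)); rewrite y_def => -[[c' x_def _] | [d dc xd]].
    by case: Kx; exists c'.
  apply: (ple_trans (mmono a (xd : ple (drop_restrict Kx) (top_att d)))).
  by rewrite [a _]ae; apply: (mmono e).
- rewrite (glue_drop (y := drop_restrict Kx)) // (glue_drop (y := drop_restrict Ky)) //.
  exact: (mmono a).
Qed.

Definition glue : Mono (subcx S) W := Build_Mono glue_fun_mono.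

Lemma glue_unique (u : Mono (subcx S) W) :
  meq (mcomp u drop_incl) a -> meq (mcomp u top_cell) e -> meq u glue.
Proof.
move=> ua ue x; case: (excluded_middle_informative (same_cell K (sval x))) => [[c x_def] | Kx].
- have cT : setT \in val c by move: (proj2_sig x).1; rewrite x_def => -[].
  have -> : x = top_cell c by apply: sval_inj; rewrite /= attach_int.
  by rewrite [u _]ue /=; symmetry; apply: glue_cell; rewrite /= attach_int.
- have -> : x = drop_incl (drop_restrict Kx) by apply: sval_inj.
  by rewrite [u _]ua /=; symmetry; apply: glue_drop.
Qed.

End Glue.

Lemma top_cell_pushout : is_pushout (bd_incl n) top_att top_cell drop_incl.
Proof.
split=> [d | W a e ae]; first by apply: sval_inj; rewrite /= attach_bd.
exists (glue ae); split=> [x | ]; first exact: glue_drop.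
split=> [c | ]; last exact: glue_unique.
case: (chainsP c) => [[d ->] | cT]; last by apply: glue_cell; rewrite /= attach_int.
by rewrite /= (@glue_drop W a e _ (top_att d)) /= ?attach_bd //; exact: ae.
Qed.

End DropTopCell.

Lemma cellular_subcx S : subcx_closed S -> cellular (subcx S).
Proof.
have [m] := ubnP (length S); elim: m S => // m IH S lenS S_closed.
have [-> | S_nil] : S = nil \/ S <> nil by case: S {lenS S_closed}; [left | right].
  by apply: cellular_empty => -[x [_ [k []]]].
have [[n c att b] KS K_top] := exists_max_height S_nil.
apply: cellular_pushout (top_cell_pushout KS K_top S_closed).
apply: IH; first exact: leq_trans (length_drop_cell KS) lenS.
exact: drop_cell_closed.
Qed.

Fixpoint support (x : point) : list point :=
  let: Point n _ att _ := x in
  x :: List.flat_map (fun d => support (att d)) (index_enum (bd_chains n)).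

Lemma In_index_enum (T : finType) (t : T) : List.In t (index_enum T).
Proof.
have : t \in index_enum T := mem_index_enum t.
by elim: (index_enum T) => //= u s IH; rewrite in_cons => /predU1P [->|/IH]; [left | right].
Qed.

Lemma support_self x : List.In x (support x).
Proof. by case: x; left. Qed.

Lemma support_att n c att b d y :
  List.In y (support (att d)) -> List.In y (support (Point n c att b)).
Proof.
by move=> y_d; right; apply/List.in_flat_map; exists d; split; first exact: In_index_enum.
Qed.

Lemma support_closed x n c att b d :
  List.In (Point n c att b) (support x) -> List.In (att d) (support x).
Proof.
elim: x => n' c' att' IH b' [x_def | /List.in_flat_map [d' [_ d'_supp]]].
- have n'n : n' = n by case: x_def.
  subst n'; case/Point_inj: x_def => _ -> _.
  exact: support_att (support_self _).
- exact: support_att (IH d' d'_supp).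
Qed.

Lemma support_wf x y : wf_pt x -> List.In y (support x) -> wf_pt y.
Proof.
elim: x => n c att IH b x_wf [<- // | /List.in_flat_map [d [_ y_d]]].
by case: x_wf => _ att_wf _; exact: IH d (att_wf d) y_d.
Qed.

Lemma flat_support_closed (l : list point) :
  (forall x, List.In x l -> wf_pt x) -> subcx_closed (List.flat_map support l).
Proof.
move=> l_wf k /List.in_flat_map [x [xl kx]]; split; first exact: support_wf (l_wf x xl) kx.
case: k kx => n c att b kx d; exists (att d); last exact: same_cell_refl.
by apply/List.in_flat_map; exists x; split; last exact: support_closed kx.
Qed.

Lemma retract_of_subcx S (s : Mono A free_cx) :
  meq (mcomp proj_cx s) (mid A) -> (forall a, in_subcx S (sval (s a))) ->
  retract_of A (subcx S).
Proof.
move=> sK s_S.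
exists (@Build_Mono A (subcx S) (fun a => exist _ (sval (s a)) (conj (proj2_sig (s a)) (s_S a)))
          (fun x y xy => mmono s xy)).
by exists (@Build_Mono (subcx S) A (fun x => proj_pt (sval x))
             (fun x y xy => proj_pt_mono (proj2_sig y).1 xy)).
Qed.

End FreeCellComplex.

Lemma cofibrant_retract_of_subcx (A : Poset) : finite_poset A -> cofibrant A ->
  exists S : list (point A), subcx_closed S /\ retract_of A (subcx S).
Proof.
move=> [l lA] A_cof; have [s sK] := A_cof _ _ _ (@proj_cx_trivial_fibration A) (mid A).
exists (List.flat_map (@support A) (List.map (fun a => sval (s a)) l)); split.
  by apply: flat_support_closed => x /List.in_map_iff [a [<- _]]; exact: proj2_sig.
apply: (retract_of_subcx sK) => a; exists (sval (s a)); last exact: same_cell_refl.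
apply/List.in_flat_map; exists (sval (s a)); split; last exact: support_self.
by apply/List.in_map; exact: lA.
Qed.

Theorem lemma6p1 (A : Poset) :
  finite_poset A -> inhabited A ->
  (forall (n : nat) (X Y : Poset) (f : Mono (PiSd2bdDelta n) X)
          (j : Mono (PiSd2Delta n) Y) (g : Mono X Y),
      is_pushout (bd_incl n) f j g -> retract_of A Y -> retract_of A X) ->
  ~ cofibrant A.
Proof.
move=> A_fin A_inh retract_pushout A_cof.
have [S [S_closed AS]] := cofibrant_retract_of_subcx A_fin A_cof.
exact: cellular_not_retract A_inh retract_pushout _ (cellular_subcx S_closed) AS.
Qed.
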